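(* Let $(X,S_b)$ be an $S_b$-metric space with $b\geq 1$, let $x_1,x_2\in X$, and let $f:X\to X$ be a self-mapping for which there exist $\alpha\in(0,1)$ and a non-decreasing function $\varphi:(0,\infty)\to(1,\infty)$ such that for all $x\in X\setminus\{x_1,x_2\}$, $$S_b(x,x,fx)>0 \implies \varphi\big(S_b(x,x,fx)\big)\leq \big[\varphi\big(|S_b(x,x,x_1)-S_b(x,x,x_2)|\big)\big]^{\alpha}$$ (i.e. $f$ is a Jleli-Samet type $H_{x_1,x_2}$-$S_b$-contraction). Let $$r=\inf\{S_b(x,x,fx): x\neq fx,\ x\in X\}.$$ If $fx_1=x_1$, $fx_2=x_2$ and $r>0$, then $f$ fixes the hyperbola $H^{S_b}_r(x_1,x_2)=\{x\in X: |S_b(x,x,x_1)-S_b(x,x,x_2)|=r\}$, i.e. $fx=x$ for every $x\in H^{S_b}_r(x_1,x_2)$.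
   Context: An $S_b$-metric space $(X,S_b)$ with constant $b\geq 1$ is a nonempty set $X$ with a function $S_b:X\times X\times X\to[0,\infty)$ such that for all $x,y,z,a\in X$: (1) $S_b(x,y,z)=0$ if and only if $x=y=z$; (2) $S_b(x,y,z)\leq b[S_b(x,x,a)+S_b(y,y,a)+S_b(z,z,a)]$. A mapping $f$ fixes a set $\mathcal{F}\subseteq X$ if $\mathcal{F}$ is contained in the fixed point set $\{x\in X: fx=x\}$. *)

From Stdlib Require Import Reals.
Open Scope R_scope.

Definition Sb_metric (X : Type) (S : X -> X -> X -> R) (b : R) : Prop :=
  1 <= b /\
  (forall x y z, 0 <= S x y z) /\
  (forall x y z, S x y z = 0 <-> (x = y /\ y = z)) /\
  (forall x y z a, S x y z <= b * (S x x a + S y y a + S z z a)).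

Definition is_inf (E : R -> Prop) (r : R) : Prop :=
  (forall y, E y -> r <= y) /\
  (forall m, (forall y, E y -> m <= y) -> m <= r).

(* Jleli-Samet type H_{x1,x2}-S_b-contraction with parameters alpha, phi.
   phi : (0,oo) -> (1,oo) non-decreasing, modelled as a total function
   whose relevant properties are only required on (0,oo). *)
Definition JS_H_Sb_contraction (X : Type) (S : X -> X -> X -> R)
  (f : X -> X) (x1 x2 : X) (alpha : R) (phi : R -> R) : Prop :=
  0 < alpha < 1 /\
  (forall t, 0 < t -> 1 < phi t) /\
  (forall s t, 0 < s -> s <= t -> phi s <= phi t) /\
  (forall x, x <> x1 -> x <> x2 ->
     0 < S x x (f x) ->
     0 < Rabs (S x x x1 - S x x x2) ->
     phi (S x x (f x)) <= Rpower (phi (Rabs (S x x x1 - S x x x2))) alpha).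

Definition hyperbola (X : Type) (S : X -> X -> X -> R) (r : R) (x1 x2 : X)
  (x : X) : Prop := Rabs (S x x x1 - S x x x2) = r.

(* At a non-fixed point x on the hyperbola of level r, the contraction gives
   phi (S x x (f x)) <= phi r ^ alpha < phi r, so the displacement S x x (f x)
   would be smaller than r by monotonicity of phi; but r is the infimum of
   all displacements. *)
From Stdlib Require Import Reals Lra Classical.
Open Scope R_scope.

Lemma Rpower_lt_base (a alpha : R) : 1 < a -> alpha < 1 -> Rpower a alpha < a.
Proof.
  intros Ha Halpha.
  pattern a at 2; rewrite <- (Rpower_1 a) by lra.
  now apply Rpower_lt.
Qed.

Lemma Sb_metric_neq_pos (X : Type) (S : X -> X -> X -> R) (b : R) (x y : X) :
  Sb_metric X S b -> x <> y -> 0 < S x x y.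
Proof.
  intros [_ [Snn [S0 _]]] Hxy.
  destruct (Snn x x y) as [Hpos | Hzero]; [exact Hpos |].
  symmetry in Hzero; apply S0 in Hzero.
  now destruct Hzero.
Qed.

Lemma JS_contraction_displacement_lt (X : Type) (S : X -> X -> X -> R)
  (f : X -> X) (x1 x2 : X) (alpha : R) (phi : R -> R) (x : X) :
  JS_H_Sb_contraction X S f x1 x2 alpha phi ->
  x <> x1 -> x <> x2 -> 0 < S x x (f x) ->
  0 < Rabs (S x x x1 - S x x x2) ->
  S x x (f x) < Rabs (S x x x1 - S x x x2).
Proof.
  intros [Halpha [Hphi_gt1 [Hphi_mono Hcontr]]] Hx1 Hx2 Hdisp Hlevel.
  set (t := Rabs (S x x x1 - S x x x2)) in *.
  destruct (Rlt_or_le (S x x (f x)) t) as [Hlt | Hge]; [exact Hlt | exfalso].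
  assert (Hphi_le : phi t <= phi (S x x (f x))) by now apply Hphi_mono.
  assert (Hshrink : Rpower (phi t) alpha < phi t)
    by (apply Rpower_lt_base; [apply Hphi_gt1 |]; lra).
  pose proof (Hcontr x Hx1 Hx2 Hdisp Hlevel) as Hphi_contr; fold t in Hphi_contr.
  lra.
Qed.

Theorem theorem2p11 (X : Type) (S : X -> X -> X -> R) (b : R)
  (x1 x2 : X) (f : X -> X) (alpha : R) (phi : R -> R) (r : R) :
  Sb_metric X S b ->
  JS_H_Sb_contraction X S f x1 x2 alpha phi ->
  is_inf (fun y => exists x, x <> f x /\ y = S x x (f x)) r ->
  f x1 = x1 -> f x2 = x2 -> 0 < r ->
  forall x, hyperbola X S r x1 x2 x -> f x = x.
Proof.
  intros HS Hcontr [Hinf_lb _] Hfix1 Hfix2 Hr x Hx.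
  destruct (classic (f x = x)) as [Hfix | Hmoved]; [exact Hfix | exfalso].
  assert (Hx1 : x <> x1) by (intros ->; congruence).
  assert (Hx2 : x <> x2) by (intros ->; congruence).
  assert (Hdisp : 0 < S x x (f x))
    by (apply (Sb_metric_neq_pos X S b); congruence).
  assert (Hr_le : r <= S x x (f x))
    by (apply Hinf_lb; exists x; split; [congruence | reflexivity]).
  unfold hyperbola in Hx.
  pose proof (JS_contraction_displacement_lt X S f x1 x2 alpha phi x
                Hcontr Hx1 Hx2 Hdisp ltac:(lra)).
  lra.
Qed.
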